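(* A convex body $K\subset\mathbb{C}^n$ is symmetric if and only if some translated copy $K'$ of $K$ has the property that for every complex $1$-dimensional linear subspace $L\subset\mathbb{C}^n$, the orthogonal projection of $K'$ onto $L$ is a closed disk in $L$ centered at the origin.
   Context: A convex body is a compact convex subset of $\mathbb{C}^n$ with nonempty interior. $\mathbb{S}^1=\{\xi\in\mathbb{C}:|\xi|=1\}$. A set $A\subset\mathbb{C}^n$ is called symmetric if there is a translated copy $A'=A-x_0$ of $A$ such that $\xi A'=A'$ for every $\xi\in\mathbb{S}^1$; $x_0$ is then called the center of symmetry. Orthogonal projections are with respect to the standard Hermitian inner product on $\mathbb{C}^n$; a disk in a complex line is a closed Euclidean round disk in it. *)

(* C^n is modelled as pairs (x, y) of real row vectors, z = x + i y. *)
From HB Require Import structures.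
From mathcomp Require Import all_boot all_order all_algebra.
From mathcomp Require Import all_classical all_reals all_analysis.
Set Implicit Arguments. Unset Strict Implicit. Unset Printing Implicit Defensive.
Import Order.TTheory GRing.Theory Num.Theory numFieldNormedType.Exports.
Local Open Scope classical_set_scope.
Local Open Scope ring_scope.

(* C^n, with the product (= Euclidean) topology of R^n x R^n = R^(2n). *)
Notation Cn R n := ('rV[R]_n * 'rV[R]_n)%type.

(* complex scalars xi = a + i b are pairs (a, b) *)
Notation Cx R := (R * R)%type.

Definition cadd (R : realType) n (z w : Cn R n) : Cn R n := (z.1 + w.1, z.2 + w.2).
Definition csub (R : realType) n (z w : Cn R n) : Cn R n := (z.1 - w.1, z.2 - w.2).
Definition czero (R : realType) n : Cn R n := (0, 0).

Definition rscale (R : realType) n (t : R) (z : Cn R n) : Cn R n := (t *: z.1, t *: z.2).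

(* complex scalar multiplication (a + i b)(x + i y) = (a x - b y) + i (a y + b x) *)
Definition cscale (R : realType) n (xi : Cx R) (z : Cn R n) : Cn R n :=
  (xi.1 *: z.1 - xi.2 *: z.2, xi.1 *: z.2 + xi.2 *: z.1).

(* standard Hermitian inner product <z, w> = sum_k z_k * conj(w_k) *)
Definition hdot (R : realType) n (z w : Cn R n) : Cx R :=
  (\sum_(k < n) (z.1 0 k * w.1 0 k + z.2 0 k * w.2 0 k),
   \sum_(k < n) (z.2 0 k * w.1 0 k - z.1 0 k * w.2 0 k)).

Definition enorm2 (R : realType) n (z : Cn R n) : R := (hdot z z).1.

Definition S1 (R : realType) : set (Cx R) := [set xi | xi.1 ^+ 2 + xi.2 ^+ 2 = 1].

Definition translate (R : realType) n (A : set (Cn R n)) (x0 : Cn R n) : set (Cn R n) :=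
  (fun a => csub a x0) @` A.

Definition rconvex (R : realType) n (K : set (Cn R n)) : Prop :=
  forall x y, K x -> K y -> forall t : R, 0 <= t <= 1 ->
    K (cadd (rscale t x) (rscale (1 - t) y)).

Definition convex_body (R : realType) n (K : set (Cn R n)) : Prop :=
  compact K /\ rconvex K /\ (K°) !=set0.

Definition is_symmetric (R : realType) n (A : set (Cn R n)) : Prop :=
  exists x0 : Cn R n, forall xi, S1 xi ->
    cscale xi @` translate A x0 = translate A x0.

Definition cline (R : realType) n (v : Cn R n) : set (Cn R n) :=
  [set cscale xi v | xi in [set: Cx R]].

Definition oproj (R : realType) n (v : Cn R n) (z : Cn R n) : Cn R n :=
  cscale ((hdot z v).1 / enorm2 v, (hdot z v).2 / enorm2 v) v.

Definition centered_disk_in (R : realType) n (L D : set (Cn R n)) : Prop :=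
  exists r : R, 0 < r /\ D = [set w | L w /\ enorm2 w <= r ^+ 2].

(* If a translate K' of K is invariant under the circle action, let m be a point of K'
   whose projection onto a complex line L is farthest from the origin.  Every point of
   the closed unit disk is a convex combination of two unit complex numbers, so rotating
   m and taking convex combinations produces points of K' projecting onto every point of
   the disk with that radius; the interior of K keeps the radius positive.  Conversely,
   if every projection of K' is a centered disk and some rotation xi x of a point x of K'
   fell outside K', let u point from the nearest point of K' to xi x.  The projection of
   K' onto the line of u is a disk, so it contains the rotation by xi of the projection of
   x, which is the projection of xi x; hence some point of K' reaches the level of xi x
   in the direction u, contradicting the separation. *)
From Pilot Require Import Defs.
From HB Require Import structures.
From mathcomp Require Import all_boot all_order all_algebra.
From mathcomp Require Import all_classical all_reals all_analysis.
From mathcomp Require Import ring lra.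
(* Defs again, so that its [cscale] shadows the homonymous library constant. *)
Import Pilot.Defs.
Set Implicit Arguments. Unset Strict Implicit. Unset Printing Implicit Defensive.
Import Order.TTheory GRing.Theory Num.Theory numFieldNormedType.Exports.
Local Open Scope classical_set_scope.
Local Open Scope ring_scope.

Section ComplexScalars.
Variable R : realType.
Implicit Types c d : Cx R.

Definition cmul c d : Cx R := (c.1 * d.1 - c.2 * d.2, c.1 * d.2 + c.2 * d.1).
Definition cabs2 c : R := c.1 ^+ 2 + c.2 ^+ 2.
Definition cdiv c d : Cx R :=
  ((c.1 * d.1 + c.2 * d.2) / cabs2 d, (c.2 * d.1 - c.1 * d.2) / cabs2 d).

Lemma cabs2_ge0 c : 0 <= cabs2 c.
Proof. by rewrite addr_ge0 ?sqr_ge0. Qed.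

Lemma cabs2_gt0 c : c.1 != 0 -> 0 < cabs2 c.
Proof. by move=> c1; rewrite ltr_wpDr ?sqr_ge0 // exprn_even_gt0. Qed.

Lemma cabs2_cmul c d : cabs2 (cmul c d) = cabs2 c * cabs2 d.
Proof. rewrite /cabs2 /=; ring. Qed.

Lemma cabs2_cdiv c d : cabs2 d != 0 -> cabs2 (cdiv c d) = cabs2 c / cabs2 d.
Proof. by rewrite /cdiv /cabs2 /= => d0; field. Qed.

Lemma cmulC c d : cmul c d = cmul d c.
Proof. by rewrite /cmul; congr pair; ring. Qed.

Lemma cdivK c d : cabs2 d != 0 -> cmul (cdiv c d) d = c.
Proof. by case: c => c1 c2; rewrite /cmul /cdiv /cabs2 /= => d0; congr pair; field. Qed.

(* Every point of the closed unit disk lies on a vertical chord of the circle. *)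
Lemma unit_disk_chord c : cabs2 c <= 1 ->
  exists xi xi' l, [/\ S1 xi, S1 xi', 0 <= l <= 1 &
    c = (l * xi.1 + (1 - l) * xi'.1, l * xi.2 + (1 - l) * xi'.2)].
Proof.
case: c => a b; rewrite /cabs2 /= => ab1.
have s2 : 0 <= 1 - a ^+ 2 by have := sqr_ge0 b; lra.
pose s : R := Num.sqrt (1 - a ^+ 2).
have ss : s ^+ 2 = 1 - a ^+ 2 by rewrite sqr_sqrtr.
have s0 : 0 <= s := sqrtr_ge0 _.
have S1s : S1 (a, s) by rewrite /S1 /= ss; ring.
have S1Ns : S1 (a, - s) by rewrite /S1 /= sqrrN ss; ring.
exists (a, s), (a, - s).
have [s0'|sn0] := eqVneq s 0.
  have b0 : b = 0.
    by apply/eqP; rewrite -sqrf_eq0 eq_le sqr_ge0 andbT; move: ss; rewrite s0' expr0n /=; lra.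
  exists 1; split => //; first by rewrite ler01 lexx.
  by rewrite b0 s0' /=; congr pair; ring.
have sp : 0 < s by rewrite lt_def sn0 s0.
have bs : b ^+ 2 <= s ^+ 2 by rewrite ss; lra.
have [bl bu] : - s <= b /\ b <= s by split; nra.
exists ((s + b) / (2 * s)); split => //.
- by rewrite divr_ge0 ?mulr_ge0 ?ler_pdivrMr ?mulr_gt0 //=; lra.
- by rewrite /=; congr pair; field.
Qed.

End ComplexScalars.

Section ComplexSpace.
Variables (R : realType) (n : nat).
Implicit Types (z w v x y : Cn R n) (c d : Cx R).

Lemma cn_eq z w : (forall k, z.1 0 k = w.1 0 k) -> (forall k, z.2 0 k = w.2 0 k) ->
  z = w.
Proof. by case: z w => ? ? [? ?] h1 h2; congr pair; apply/rowP => k; rewrite ?h1 ?h2. Qed.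

Lemma cscale_cmul c d z : cscale c (cscale d z) = cscale (cmul c d) z.
Proof. by apply: cn_eq => k; rewrite !mxE /=; ring. Qed.

Lemma cscale1 z : cscale (1, 0) z = z.
Proof. by apply: cn_eq => k; rewrite !mxE /=; ring. Qed.

Lemma cscale_convex l c d z :
  cscale (l * c.1 + (1 - l) * d.1, l * c.2 + (1 - l) * d.2) z =
  cadd (rscale l (cscale c z)) (rscale (1 - l) (cscale d z)).
Proof. by apply: cn_eq => k; rewrite !mxE /=; ring. Qed.

Lemma hdot_cscale c z w : hdot (cscale c z) w = cmul c (hdot z w).
Proof.
rewrite /hdot /cmul /= !mulr_sumr -sumrB -big_split /=.
by congr pair; apply: eq_bigr => k _ /=; rewrite !mxE; ring.
Qed.

Lemma hdot_csub1 z w u : (hdot (csub z w) u).1 = (hdot z u).1 - (hdot w u).1.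
Proof. by rewrite /hdot /= -sumrB; apply: eq_bigr => k _ /=; rewrite !mxE; ring. Qed.

Lemma hdot_shift z t v : (hdot (cadd z (rscale t v)) v).1 = (hdot z v).1 + t * enorm2 v.
Proof.
by rewrite /enorm2 /hdot /= mulr_sumr -big_split; apply: eq_bigr => k _ /=; rewrite !mxE; ring.
Qed.

Lemma enorm2E z : enorm2 z = \sum_(k < n) (z.1 0 k ^+ 2 + z.2 0 k ^+ 2).
Proof. by apply: eq_bigr => k _; rewrite !expr2. Qed.

Lemma hdot_self z : hdot z z = (enorm2 z, 0).
Proof. by congr pair; rewrite big1 // => k _; ring. Qed.

Lemma enorm2_ge0 z : 0 <= enorm2 z.
Proof. by rewrite enorm2E sumr_ge0 // => k _; rewrite addr_ge0 ?sqr_ge0. Qed.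

Lemma enorm2_gt0 z : z <> (0, 0) -> 0 < enorm2 z.
Proof.
move=> z0; rewrite lt_def enorm2_ge0 andbT; apply/eqP => /eqP.
rewrite enorm2E psumr_eq0 => [/allP zk0|k _]; last by rewrite addr_ge0 ?sqr_ge0.
have zk k : z.1 0 k = 0 /\ z.2 0 k = 0.
  have /implyP/(_ isT) := zk0 k (mem_index_enum _).
  by rewrite paddr_eq0 ?sqr_ge0 // !sqrf_eq0 => /andP[/eqP -> /eqP ->].
by apply: z0; apply: cn_eq => k; rewrite mxE; case: (zk k).
Qed.

Lemma enorm2_cscale c z : enorm2 (cscale c z) = cabs2 c * enorm2 z.
Proof. by rewrite !enorm2E mulr_sumr; apply: eq_bigr => k _ /=; rewrite !mxE /cabs2; ring. Qed.

Lemma enorm2_csub_convex y p z t :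
  enorm2 (csub y (cadd (rscale t z) (rscale (1 - t) p))) =
  enorm2 (csub y p) - 2 * t * (hdot (csub z p) (csub y p)).1
    + t ^+ 2 * enorm2 (csub z p).
Proof.
rewrite !enorm2E /hdot /= mulr_sumr -sumrB mulr_sumr -big_split /=.
by apply: eq_bigr => k _ /=; rewrite !mxE; ring.
Qed.

Definition oproj_coord v z : Cx R := ((hdot z v).1 / enorm2 v, (hdot z v).2 / enorm2 v).

Lemma oprojE v z : oproj v z = cscale (oproj_coord v z) v.
Proof. by []. Qed.

Lemma oproj_coord1E v z : (oproj_coord v z).1 = (hdot z v).1 / enorm2 v.
Proof. by []. Qed.

Lemma oproj_coord_cscale v c z : oproj_coord v (cscale c z) = cmul c (oproj_coord v z).
Proof. by rewrite /oproj_coord hdot_cscale /cmul /=; congr pair; ring. Qed.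

Lemma oproj_coord_cscale_self v c : v <> (0, 0) -> oproj_coord v (cscale c v) = c.
Proof.
move=> /enorm2_gt0; rewrite lt0r => /andP[v0 _].
by case: c => c1 c2; rewrite /oproj_coord hdot_cscale hdot_self /cmul /=; congr pair; field.
Qed.

Lemma continuous_coord1 k : continuous (fun z : Cn R n => z.1 0 k).
Proof.
by move=> z; apply: (@continuous_comp _ _ _ fst (fun M : 'rV[R]_n => M 0 k));
  [exact: cvg_fst | exact: coord_continuous].
Qed.

Lemma continuous_coord2 k : continuous (fun z : Cn R n => z.2 0 k).
Proof.
by move=> z; apply: (@continuous_comp _ _ _ snd (fun M : 'rV[R]_n => M 0 k));
  [exact: cvg_snd | exact: coord_continuous].
Qed.

Lemma continuous_hdot1 w : continuous (fun z : Cn R n => (hdot z w).1).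
Proof.
apply: continuous_big => [|k _ z]; first exact: add_continuous.
by apply: cvgD; apply: cvgM;
  (exact: cvg_cst || exact: continuous_coord1 || exact: continuous_coord2).
Qed.

Lemma continuous_hdot2 w : continuous (fun z : Cn R n => (hdot z w).2).
Proof.
apply: continuous_big => [|k _ z]; first exact: add_continuous.
by apply: cvgB; apply: cvgM;
  (exact: cvg_cst || exact: continuous_coord1 || exact: continuous_coord2).
Qed.

Lemma continuous_enorm2 : continuous (@enorm2 R n).
Proof.
rewrite (_ : @enorm2 R n = fun z => \sum_(k < n) (z.1 0 k ^+ 2 + z.2 0 k ^+ 2)); last first.
  by apply: funext => z; rewrite enorm2E.
apply: continuous_big => [|k _ z]; first exact: add_continuous.
by apply: cvgD; rewrite expr2; apply: cvgM;
  (exact: continuous_coord1 || exact: continuous_coord2).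
Qed.

Lemma continuous_enorm2_csub y : continuous (fun z => enorm2 (csub y z)).
Proof.
move=> z; apply: (@continuous_comp _ _ _ (csub y) (@enorm2 R n)); last exact: continuous_enorm2.
by apply: cvgB; [exact: cvg_cst | exact: cvg_id].
Qed.

Lemma continuous_enorm2_oproj v : continuous (fun z => enorm2 (oproj v z)).
Proof.
move=> z; rewrite /oproj; under eq_fun do rewrite enorm2_cscale.
apply: cvgM; last exact: cvg_cst.
by apply: cvgD; rewrite expr2; apply: cvgM; apply: cvgM;
  (exact: cvg_cst || exact: continuous_hdot1 || exact: continuous_hdot2).
Qed.

End ComplexSpace.

Lemma nonpos_of_le_vanishing_mul (R : realFieldType) (r E : R) : 0 <= E ->
  (forall t : R, 0 < t <= 1 -> 2 * r <= t * E) -> r <= 0.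
Proof.
move=> E0 small; rewrite leNgt; apply/negP => r0.
have Er0 : 0 < E + r by lra.
have := small (r / (E + r)); rewrite divr_gt0 // ler_pdivrMr // mul1r.
rewrite mulrAC ler_pdivlMr // => /(_ (ltac:(lra))).
nra.
Qed.

Lemma nbhs_ray (R : realType) (V : normedModType R) (x v : V) (A : set V) :
  nbhs x A -> exists2 t : R, 0 < t & A (x + t *: v).
Proof.
move=> xA.
have : nbhs (0 : R) ((fun t : R => x + t *: v) @^-1` A).
  have cont : {for 0, continuous (fun t : R => x + t *: v)}.
    by apply: cvgD; [exact: cvg_cst | apply: cvgZr_tmp; exact: cvg_id].
  by apply: cont; rewrite scale0r addr0.
move=> /nbhs_ballP [e /= e0 eA]; exists (e / 2); first by rewrite divr_gt0.
by apply: eA; rewrite /ball /= sub0r normrN gtr0_norm ?divr_gt0 //; lra.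
Qed.

Section ConvexSets.
Variables (R : realType) (n : nat).
Implicit Types (K : set (Cn R n)) (x y z v : Cn R n) (c : Cx R).

Definition circled K := forall xi, S1 xi -> forall x, K x -> K (cscale xi x).

Lemma compact_translate K x0 : compact K -> compact (translate K x0).
Proof.
move=> cK; apply: continuous_compact => //; apply: continuous_subspaceT => z.
by apply: cvgB; [exact: cvg_id | exact: cvg_cst].
Qed.

Lemma rconvex_translate K x0 : rconvex K -> rconvex (translate K x0).
Proof.
move=> cvK _ _ [a Ka <-] [b Kb <-] t t01.
exists (cadd (rscale t a) (rscale (1 - t) b)); first exact: cvK.
by apply: cn_eq => k; rewrite !mxE; ring.
Qed.

Lemma circled_image K : circled K -> forall xi, S1 xi -> cscale xi @` K = K.
Proof.
move=> circK xi Sxi; have xi1 : cabs2 xi = 1 := Sxi.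
apply/seteqP; split => [_ [x Kx <-]|y Ky]; first exact: circK.
have xi0 : cabs2 xi != 0 by rewrite xi1 oner_neq0.
have S1inv : cabs2 (cdiv (1, 0) xi) = 1.
  by rewrite cabs2_cdiv // xi1 divr1 /cabs2 /=; ring.
exists (cscale (cdiv (1, 0) xi) y); first exact: circK S1inv _ Ky.
by rewrite cscale_cmul cmulC cdivK // cscale1.
Qed.

Lemma circled_convex_balanced K : rconvex K -> circled K ->
  forall c, cabs2 c <= 1 -> forall x, K x -> K (cscale c x).
Proof.
move=> cvK circK c c1 x Kx.
have [xi [xi' [l [Sxi Sxi' l01 ->]]]] := unit_disk_chord c1.
by rewrite cscale_convex; apply: cvK => //; exact: circK.
Qed.

Lemma nearest_point_obtuse K y p : rconvex K -> K p ->
  (forall z, K z -> enorm2 (csub y p) <= enorm2 (csub y z)) ->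
  forall z, K z -> (hdot (csub z p) (csub y p)).1 <= 0.
Proof.
move=> cvK Kp pmin z Kz; apply: (nonpos_of_le_vanishing_mul (enorm2_ge0 (csub z p))).
move=> t /andP[t0 t1].
have := pmin _ (cvK _ _ Kz Kp t (ltac:(rewrite (ltW t0) t1 //))).
rewrite enorm2_csub_convex -subr_ge0 => h.
by rewrite -(ler_pM2l t0); nra.
Qed.

Lemma separate_point_compact_convex K x y : compact K -> rconvex K -> K x -> ~ K y ->
  exists2 u, u <> (0, 0) & forall z, K z -> (hdot z u).1 < (hdot y u).1.
Proof.
move=> cK cvK Kx Ny.
have [p /[!inE] Kp pmin] := compact_EVT_min (ex_intro _ x Kx) cK
  (continuous_subspaceT (@continuous_enorm2_csub _ _ y)).
have u0 : csub y p <> (0, 0).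
  by move=> yp0; apply: Ny; suff -> : y = p by [];
    apply/eqP; rewrite -subr_eq0; apply/eqP; exact: yp0.
exists (csub y p) => // z Kz.
have := nearest_point_obtuse cvK Kp (fun w Kw => pmin w (mem_set Kw)) Kz.
have := enorm2_gt0 u0; rewrite /enorm2 !hdot_csub1; lra.
Qed.

Lemma circled_of_disk_projections K : compact K -> rconvex K ->
  (forall v, v <> (0, 0) -> centered_disk_in (cline v) (oproj v @` K)) -> circled K.
Proof.
move=> cK cvK disks xi Sxi x Kx; apply: contrapT => Ny.
have [u u0 sep] := separate_point_compact_convex cK cvK Kx Ny.
have [r [_ diskE]] := disks u u0.
have : (oproj u @` K) (cscale (cmul xi (oproj_coord u x)) u).
  have : (oproj u @` K) (oproj u x) by exists x.
  rewrite diskE => -[_ xr]; split; first by exists (cmul xi (oproj_coord u x)).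
  by rewrite enorm2_cscale cabs2_cmul (_ : cabs2 xi = 1) // mul1r -enorm2_cscale.
case=> z Kz /(congr1 (oproj_coord u)).
rewrite oprojE !oproj_coord_cscale_self // -oproj_coord_cscale.
move=> /(congr1 fst); rewrite !oproj_coord1E.
move=> /(mulIf (invr_neq0 (lt0r_neq0 (enorm2_gt0 u0)))) zy.
by have := sep z Kz; rewrite zy ltxx.
Qed.

Lemma disk_projection_of_circled K v : compact K -> rconvex K -> circled K ->
  v <> (0, 0) -> (exists2 z, K z & (hdot z v).1 != 0) ->
  centered_disk_in (cline v) (oproj v @` K).
Proof.
move=> cK cvK circK v0 [z1 Kz1 z1v].
have e0 := enorm2_gt0 v0.
have [m /[!inE] Km mmax] := compact_EVT_max (ex_intro _ z1 Kz1) cK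
  (continuous_subspaceT (@continuous_enorm2_oproj _ _ v)).
set q := oproj_coord v m.
have q0 : 0 < cabs2 q.
  have := mmax _ (mem_set Kz1); rewrite !oprojE !enorm2_cscale ler_pM2r // => z1q.
  apply: (lt_le_trans _ z1q); apply: cabs2_gt0.
  by rewrite oproj_coord1E mulf_neq0 // invr_eq0 gt_eqF.
exists (Num.sqrt (cabs2 q * enorm2 v)); split; first by rewrite sqrtr_gt0 mulr_gt0.
rewrite sqr_sqrtr ?mulr_ge0 ?cabs2_ge0 ?enorm2_ge0 //.
apply/seteqP; split => [_ [z Kz <-]|_ [[c _ <-] cq]].
  split; first by exists (oproj_coord v z).
  by rewrite -enorm2_cscale; exact: mmax (mem_set Kz).
rewrite enorm2_cscale ler_pM2r // in cq.
have q0' : cabs2 q != 0 by rewrite gt_eqF.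
exists (cscale (cdiv c q) m); last by rewrite oprojE oproj_coord_cscale cdivK.
by apply: circled_convex_balanced => //; rewrite cabs2_cdiv // ler_pdivrMr // mul1r.
Qed.

Lemma interior_off_hyperplane K v (a : R) : K° !=set0 -> v <> (0, 0) ->
  exists2 z, K z & (hdot z v).1 != a.
Proof.
move=> [k0 k0i] v0.
have [t t0 Kt] := nbhs_ray v k0i.
have [k0a|] := eqVneq (hdot k0 v).1 a; last by exists k0 => //; exact: nbhs_singleton.
exists (k0 + t *: v) => //.
rewrite (_ : k0 + t *: v = cadd k0 (rscale t v)) // hdot_shift k0a.
by rewrite addrC -subr_eq0 addrK mulf_neq0 ?gt_eqF ?enorm2_gt0.
Qed.

End ConvexSets.

Theorem lemma2p5 (R : realType) (n : nat) (K : set (Cn R n)) :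
  convex_body K ->
  (is_symmetric K <->
   exists x0 : Cn R n, forall v : Cn R n, v <> (0, 0) ->
     centered_disk_in (cline v) (oproj v @` translate K x0)).
Proof.
move=> [cK [cvK K0]]; split=> -[x0 hx0]; exists x0.
  have cK' : compact (translate K x0) := compact_translate cK.
  have cvK' : rconvex (translate K x0) := rconvex_translate cvK.
  have circK' : circled (translate K x0).
    by move=> xi Sxi x Kx; rewrite -(hx0 xi Sxi); exists x.
  move=> v v0; apply: (disk_projection_of_circled cK' cvK' circK' v0).
  have [z Kz zv] := interior_off_hyperplane (hdot x0 v).1 K0 v0.
  by exists (csub z x0); [exists z | rewrite hdot_csub1 subr_eq0].
apply: circled_image.
exact: circled_of_disk_projections (compact_translate cK) (rconvex_translate cvK) hx0.
Qed.
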